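(* Let $r$ be a request whose underlying undirected graph of $G_r$ is a tree, and let $(x_r,\vec y_r,\vec z_r,\vec a_r)$ be a feasible solution of the LP relaxation of the multi-commodity flow formulation. Then the solution can be decomposed into a finite family $\mathcal D_r=\{(f^k_r,m^k_r)\}_k$ with weights $f^k_r>0$ and valid mappings $m^k_r\in\mathcal M_r$ such that (i) $x_r=\sum_kf^k_r$ and (ii) $a^{x,y}_r\ge\sum_kf^k_rA(m^k_r,x,y)$ for every resource $(x,y)\in R_S$.
   Context: Substrate: directed graph $G_S=(V_S,E_S)$, node types $\mathcal T$, $V_S^\tau\subseteq V_S$, node resources $R^V_S=\{(\tau,u):u\in V_S^\tau\}$, resources $R_S=R^V_S\cup E_S$, capacities $d_S(x,y)>0$. Request $r$: directed graph $G_r=(V_r,E_r)$, types $\tau_r$, demands $d_r(i),d_r(i,j)\ge0$, allowed node sets $V_S^{r,i}\subseteq V_S^{\tau_r(i)}$, allowed edge sets $E_S^{r,i,j}\subseteq E_S$. A valid mapping $m_r=(m^V_r,m^E_r)$: $m^V_r(i)\in V_S^{r,i}$; $m^E_r(i,j)$ the edge set of a directed path from $m^V_r(i)$ to $m^V_r(j)$ in $E_S^{r,i,j}$ (empty iff endpoints coincide); $\mathcal M_r$ the set of valid mappings; allocations $A(m_r,\tau,u)=\sum_{i:\tau_r(i)=\tau,m^V_r(i)=u}d_r(i)$, $A(m_r,u,v)=\sum_{(i,j):(u,v)\in m^E_r(i,j)}d_r(i,j)$. LP relaxation of the MCF formulation: variables $x_r\in[0,1]$, $y^u_{r,i}\in[0,1]$,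 $z^{u,v}_{r,i,j}\in[0,1]$, $a^{x,y}_r\ge 0$, constraints $\sum_{u\in V_S^{r,i}}y^u_{r,i}=x_r$ for all $i$; $y^u_{r,i}=0$ for $u\notin V_S^{r,i}$; $\sum_{(u,v)\in E_S}z^{u,v}_{r,i,j}-\sum_{(v,u)\in E_S}z^{v,u}_{r,i,j}=y^u_{r,i}-y^u_{r,j}$ for all $(i,j)\in E_r,u\in V_S$; $z^{u,v}_{r,i,j}=0$ for $(u,v)\notin E_S^{r,i,j}$; $a^{u,v}_r=\sum_{(i,j)}d_r(i,j)z^{u,v}_{r,i,j}$; $a^{\tau,u}_r=\sum_{i:\tau_r(i)=\tau}d_r(i)y^u_{r,i}$; $\sum_ra^{x,y}_r\le d_S(x,y)$. *)

From mathcomp Require Import all_boot all_order all_algebra.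
Set Implicit Arguments. Unset Strict Implicit. Unset Printing Implicit Defensive.
Import Order.TTheory GRing.Theory Num.Theory.
Local Open Scope ring_scope.

(* Substrate: finite vertex type VS, directed edge relation ES : rel VS,
   node types T, typed node sets VSt : T -> {set VS}.
   Request: finite node type VR, directed edge relation ER : rel VR,
   types typ : VR -> T, allowed node sets Vallow, allowed edge sets Eallow. *)

Section Tree.
Variables (VR : finType) (ER : rel VR).

Definition undirected : rel VR := fun i j => ER i j || ER j i.

Definition undirected_minus (a b : VR) : rel VR := fun i j =>
  (ER i j && ((i, j) != (a, b))) || (ER j i && ((j, i) != (a, b))).

(* the underlying undirected graph is a tree: nonempty, connected, and
   acyclic (every edge is a bridge: removing it disconnects its endpoints;
   this also excludes self-loops and antiparallel pairs). *)
Definition underlying_tree : Prop :=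
  [/\ (0 < #|VR|)%N,
      (forall i j, connect undirected i j) &
      (forall a b, ER a b -> ~~ connect (undirected_minus a b) a b)].
End Tree.

Section Mappings.
Variables (VS VR T : finType) (ER : rel VR).
Variables (Vallow : VR -> {set VS}) (Eallow : VR -> VR -> rel VS).

Record mapping := Mapping {
  mV : VR -> VS;
  mE : VR -> VR -> {set VS * VS} }.

Definition path_edges (u : VS) (p : seq VS) : {set VS * VS} :=
  [set e in zip (u :: p) p].

Definition valid_mapping (m : mapping) : Prop :=
  [/\ (forall i, mV m i \in Vallow i),
      (forall i j, ER i j -> exists p : seq VS,
          [/\ path (Eallow i j) (mV m i) p,
              last (mV m i) p = mV m j,
              uniq (mV m i :: p) &
              mE m i j = path_edges (mV m i) p]) &
      (forall i j, ER i j -> (mE m i j == set0) = (mV m i == mV m j))].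

Variables (R : numDomainType) (typ : VR -> T)
          (dn : VR -> R) (de : VR -> VR -> R).

Definition alloc_node (m : mapping) (tau : T) (u : VS) : R :=
  \sum_(i | (typ i == tau) && (mV m i == u)) dn i.

Definition alloc_edge (m : mapping) (u v : VS) : R :=
  \sum_(p : VR * VR | ER p.1 p.2 && ((u, v) \in mE m p.1 p.2)) de p.1 p.2.
End Mappings.

Section LP.
Variables (R : numDomainType) (VS VR T : finType) (ES : rel VS)
          (VSt : T -> {set VS}) (ER : rel VR) (typ : VR -> T)
          (dn : VR -> R) (de : VR -> VR -> R)
          (Vallow : VR -> {set VS}) (Eallow : VR -> VR -> rel VS).

(* Feasibility of (x, y, z, a) for the constraints of the LP relaxation of the
   MCF formulation that concern request r. z i j u v is z^{u,v}_{r,i,j};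
   an tau u is a^{tau,u}_r, ae u v is a^{u,v}_r. *)
Definition lp_feasible (x : R) (y : VR -> VS -> R) (z : VR -> VR -> VS -> VS -> R)
    (an : T -> VS -> R) (ae : VS -> VS -> R) : Prop :=
  [/\ [/\ 0 <= x <= 1,
          (forall i u, 0 <= y i u <= 1),
          (forall i j u v, ER i j -> 0 <= z i j u v <= 1),
          (forall tau u, u \in VSt tau -> 0 <= an tau u) &
          (forall u v, ES u v -> 0 <= ae u v)],
      [/\ (forall i, \sum_(u in Vallow i) y i u = x),
      (forall i u, u \notin Vallow i -> y i u = 0),
      (forall i j, ER i j -> forall u,
          \sum_(v | ES u v) z i j u v - \sum_(v | ES v u) z i j v u
          = y i u - y j u) &
      (forall i j u v, ER i j -> ~~ Eallow i j u v -> z i j u v = 0)],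
      (forall u v, ES u v ->
          ae u v = \sum_(p : VR * VR | ER p.1 p.2) de p.1 p.2 * z p.1 p.2 u v) &
      (forall tau u, u \in VSt tau ->
          an tau u = \sum_(i | typ i == tau) dn i * y i u)].
End LP.

(* For each request edge (i,j), z_{r,i,j} is a flow from the distribution
   y_{r,i} to y_{r,j}, so flow conservation lets every node u with y_{r,i,u} > 0
   reach, along edges of positive z_{r,i,j}, some v with y_{r,j,v} > 0, and
   conversely.  Because the request is a tree, these local choices can be made
   consistently by growing a connected subtree one edge at a time; the result
   is a valid mapping all of whose node and edge variables are positive.
   Subtracting it with the bottleneck weight f keeps the flow constraints,
   lowers x by f and zeroes one more variable, so the peeling terminates with
   x = 0.  The allocations of the peeled mappings are nonnegative combinations
   of the subtracted indicators, hence bounded by a_r. *)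

From mathcomp Require Import all_boot all_order all_algebra ring.
Set Implicit Arguments. Unset Strict Implicit. Unset Printing Implicit Defensive.
Import Order.TTheory GRing.Theory Num.Theory.
Local Open Scope ring_scope.

Section FlowReachability.
Variables (R : numDomainType) (V : finType) (E : rel V) (g : V -> V -> R)
  (a b : V -> R).
Hypotheses (g_ge0 : forall u v, 0 <= g u v) (a_ge0 : forall u, 0 <= a u)
  (b_ge0 : forall u, 0 <= b u).
Hypothesis conservation : forall u,
  \sum_(v | E u v) g u v - \sum_(v | E v u) g v u = a u - b u.

Let positive : rel V := fun u v => 0 < g u v.

Lemma net_outflow_closed_le0 (S : {set V}) :
  (forall u v, u \in S -> positive u v -> v \in S) ->
  \sum_(u in S) (\sum_(v | E u v) g u v - \sum_(v | E v u) g v u) <= 0.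
Proof.
move=> closedS; rewrite sumrB subr_le0.
have -> : \sum_(u in S) \sum_(v | E u v) g u v =
          \sum_(u in S) \sum_(v in S) (if E u v then g u v else 0).
  apply: eq_bigr => u uS; rewrite big_mkcond [RHS]big_mkcond /=.
  apply: eq_bigr => v _; case: ifP => // Euv; case: ifP => // /negbT vS.
  have [//|g_neq0] := eqVneq (g u v) 0.
  by move: vS; rewrite (closedS u v uS) // /positive lt_def g_neq0 g_ge0.
rewrite exchange_big /=; apply: ler_sum => v _.
rewrite [leLHS]big_mkcond [leRHS]big_mkcond /=; apply: ler_sum => u _.
by case: (u \in S); case: ifP.
Qed.

Lemma flow_source_reaches_sink u0 :
  0 < a u0 -> exists2 v, 0 < b v & connect positive u0 v.
Proof.
(* Summed over the vertices reachable from u0, the net supply a - b is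
   positive when no sink is reachable, yet it is the nonpositive net outflow. *)
move=> a_u0.
have [/existsP[v /andP[]] | ] := boolP [exists v, (0 < b v) && connect positive u0 v].
  by exists v.
rewrite negb_exists => /forallP no_sink.
pose S := [set v | connect positive u0 v].
have b_S v : v \in S -> b v = 0.
  rewrite inE => u0v; have := no_sink v; rewrite u0v andbT lt_def b_ge0 andbT.
  by move/negPn/eqP.
have closedS u v : u \in S -> positive u v -> v \in S.
  by rewrite !inE => u0u uv; apply: connect_trans u0u (connect1 uv).
have := net_outflow_closed_le0 closedS.
rewrite (eq_bigr _ (fun u _ => conservation u)).
rewrite (eq_bigr a) => [|u /b_S ->]; last by rewrite subr0.
rewrite (bigD1 u0) ?inE ?connect0 //= => sum_le0.
have : 0 < a u0 + \sum_(u in S | u != u0) a u by rewrite ltr_wpDr ?sumr_ge0.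
by move/lt_le_trans/(_ sum_le0); rewrite ltxx.
Qed.

End FlowReachability.

Lemma flow_sink_reached_from_source (R : numDomainType) (V : finType) (E : rel V)
    (g : V -> V -> R) (a b : V -> R) v0 :
  (forall u v, 0 <= g u v) -> (forall u, 0 <= a u) -> (forall u, 0 <= b u) ->
  (forall u, \sum_(v | E u v) g u v - \sum_(v | E v u) g v u = a u - b u) ->
  0 < b v0 -> exists2 u, 0 < a u & connect (fun u v => 0 < g u v) u v0.
Proof.
move=> g_ge0 a_ge0 b_ge0 conservation b_v0.
have conservation_rev u :
    \sum_(v | E v u) g v u - \sum_(v | E u v) g u v = b u - a u.
  by rewrite -opprB conservation opprB.
have [u a_u v0u] := flow_source_reaches_sink (fun u v => g_ge0 v u) b_ge0 a_ge0
  conservation_rev b_v0.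
by exists u; rewrite // -[connect _ _ _]connect_rev.
Qed.

Lemma connect_uniq_path (V : finType) (e : rel V) u v : connect e u v ->
  exists p, [/\ path e u p, last u p = v & uniq (u :: p)].
Proof. by case/connectP=> p /shortenP[p' ? ? _] ->; exists p'. Qed.

Lemma mem_zip_fst (S T : eqType) (s : seq S) (t : seq T) a b :
  (a, b) \in zip s t -> a \in s.
Proof.
elim: s t => [|c s IHs] [|d t] //=; rewrite !inE => /orP[/eqP[-> _]|/IHs->].
  by rewrite eqxx.
by rewrite orbT.
Qed.

Section PathEdges.
Variable V : finType.
Implicit Types (s t u v : V) (p : seq V).

Lemma path_edges_nil s e : e \in path_edges s [::] = false.
Proof. by rewrite inE. Qed.

Lemma path_edges_cons s t p e :
  (e \in path_edges s (t :: p)) = (e == (s, t)) || (e \in path_edges t p).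
Proof. by rewrite !inE. Qed.

Lemma path_edges_rel (r : rel V) s p u v :
  path r s p -> (u, v) \in path_edges s p -> r u v.
Proof.
elim: p s => [|t p IHp] s; first by rewrite path_edges_nil.
by rewrite /= path_edges_cons => /andP[rst rtp] /orP[/eqP[-> ->] | /IHp->].
Qed.

Lemma path_edges_eq0 s p :
  uniq (s :: p) -> (path_edges s p == set0) = (s == last s p).
Proof.
case: p => [|t p] /=.
  by rewrite eqxx => _; apply/eqP/setP => e; rewrite !inE.
case/andP=> s_notin _; have /negbTE-> : s != last t p.
  by apply: contraNneq s_notin => ->; rewrite mem_last.
by apply/negbTE/set0Pn; exists (s, t); rewrite path_edges_cons eqxx.
Qed.

Lemma path_edges_flow (R : pzRingType) (E : rel V) s p u :
  path E s p -> uniq (s :: p) ->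
  \sum_(v | E u v) ((u, v) \in path_edges s p)%:R
    - \sum_(v | E v u) ((v, u) \in path_edges s p)%:R
  = (u == s)%:R - (u == last s p)%:R :> R.
Proof.
elim: p s => [|t p IHp] s.
  by move=> _ _; rewrite !big1 ?subrr // => v _; rewrite path_edges_nil.
rewrite /= => /andP[Est tp] /andP[s_notin uniq_tp].
have edge_split v w : ((v, w) \in path_edges s (t :: p))%:R
    = ((v, w) == (s, t))%:R + ((v, w) \in path_edges t p)%:R :> R.
  rewrite path_edges_cons; case: eqP => [[-> _]|_]; last by rewrite add0r.
  suff /negbTE-> : (s, w) \notin path_edges t p by rewrite addr0.
  by apply: contra s_notin; rewrite inE => /mem_zip_fst.
under eq_bigr do rewrite edge_split.
under [X in _ - X = _]eq_bigr do rewrite edge_split.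
rewrite !big_split /= opprD addrACA (IHp t tp uniq_tp).
have -> : \sum_(v | E u v) ((u, v) == (s, t))%:R = (u == s)%:R :> R.
  have [->|us] := eqVneq u s; last first.
    by rewrite big1 // => v _; rewrite xpair_eqE (negbTE us).
  rewrite (bigD1 t) //= eqxx big1 ?addr0 // => v /andP[_ /negbTE vt].
  by rewrite xpair_eqE vt andbF.
have -> : \sum_(v | E v u) ((v, u) == (s, t))%:R = (u == t)%:R :> R.
  have [->|ut] := eqVneq u t; last first.
    by rewrite big1 // => v _; rewrite xpair_eqE (negbTE ut) andbF.
  rewrite (bigD1 s) //= eqxx big1 ?addr0 // => v /andP[_ /negbTE vs].
  by rewrite xpair_eqE vs.
by rewrite addrA subrK.
Qed.

End PathEdges.

Section TreeLabelling.
Variables (VR : finType) (ER : rel VR).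
Hypothesis tree : underlying_tree ER.
Implicit Types (S : {set VR}) (i j a b c d : VR).

Lemma undirected_sym : symmetric (undirected ER).
Proof. by move=> i j; rewrite /undirected orbC. Qed.

Lemma undirected_minus_sym c d : symmetric (undirected_minus ER c d).
Proof. by move=> i j; rewrite /undirected_minus orbC. Qed.

Lemma tree_loopless i : ~~ ER i i.
Proof. by apply/negP => Eii; case: tree => _ _ /(_ i i Eii); rewrite connect0. Qed.

Definition induced S : rel VR :=
  fun i j => [&& i \in S, j \in S & undirected ER i j].

Definition induced_connected S := {in S &, forall i j, connect (induced S) i j}.

Definition crossing S b (e : VR * VR) :=
  (e.1 \in S) && (e.2 == b) || (e.1 == b) && (e.2 \in S).

Lemma induced_sym S : symmetric (induced S).
Proof. by move=> i j; rewrite /induced undirected_sym andbCA. Qed.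

Lemma induced_sub_minus S c d :
  (c \notin S) || (d \notin S) -> subrel (induced S) (undirected_minus ER c d).
Proof.
move=> cd_out i j /and3P[iS jS Uij].
have ne x y : x \in S -> y \in S -> (x, y) != (c, d).
  by move=> xS yS; move: cd_out; apply: contraTneq => -[<- <-]; rewrite xS yS.
by rewrite /undirected_minus !ne ?andbT.
Qed.

(* Two distinct edges joining S to b would close a cycle through S. *)
Lemma crossing_edge_unique S b e e' : induced_connected S -> b \notin S ->
  ER e.1 e.2 -> ER e'.1 e'.2 -> crossing S b e -> crossing S b e' -> e = e'.
Proof.
case: e e' => c d [c' d']; rewrite /crossing /= => connS bS Ecd Ec'd' cross cross'.
have [_ _ /(_ c d Ecd) no_cycle] := tree.
apply/eqP; move: no_cycle; apply: contraNT => ne.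
set um := undirected_minus ER c d.
have um_csym : connect_sym um by apply/sym_connect_sym/undirected_minus_sym.
have um_c'd' : um c' d' by rewrite /um /undirected_minus Ec'd' eq_sym ne.
have [s' s'S um_s'b] : exists2 s', s' \in S & um s' b.
  by case/orP: cross' => /andP[] => [c'S /eqP<- | /eqP<- d'S];
    [exists c' | exists d'; rewrite // /um undirected_minus_sym].
have cd_out : (c \notin S) || (d \notin S).
  by case/orP: cross => /andP[] => [_ /eqP-> | /eqP-> _]; rewrite bS ?orbT.
have to_b s : s \in S -> connect um s b.
  move=> sS; apply: connect_trans (connect1 um_s'b).
  apply: connect_sub (connS s s' sS s'S) => x y /(induced_sub_minus cd_out).
  exact: connect1.
case/orP: cross => /andP[] => [cS /eqP-> | /eqP-> dS]; first exact: to_b.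
by rewrite um_csym to_b.
Qed.

Lemma exists_boundary_edge S i j : i \in S -> j \notin S ->
  exists a b, [/\ a \in S, b \notin S & undirected ER a b].
Proof.
move=> iS jS; have [/existsP[a /existsP[b /and3P[]]] | ] :=
  boolP [exists a, exists b, [&& a \in S, b \notin S & undirected ER a b]].
  by exists a, b.
rewrite negb_exists => /forallP no_boundary.
have closedS : closed (undirected ER) S.
  apply: intro_closed; first exact/sym_connect_sym/undirected_sym.
  move=> a b Uab aS; apply: contraR (no_boundary a) => bS.
  by apply/existsP; exists b; rewrite aS bS.
have [_ connVR _] := tree.
by move: jS; rewrite -(closed_connect closedS (connVR i j)) iS.
Qed.

Lemma induced_connected_setU1 S a b :
  induced_connected S -> a \in S -> undirected ER a b -> induced_connected (b |: S).
Proof.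
move=> connS aS Uab.
have induced_csym : connect_sym (induced (b |: S)).
  exact/sym_connect_sym/induced_sym.
suff to_a i : i \in b |: S -> connect (induced (b |: S)) i a.
  by move=> i j iS jS; rewrite (connect_trans (to_a i iS)) // induced_csym to_a.
rewrite !inE => /orP[/eqP-> | iS].
  by apply: connect1; rewrite /induced !inE eqxx aS orbT undirected_sym.
apply: connect_sub (connS i a iS aS) => x y /and3P[xS yS Uxy].
by apply: connect1; rewrite /induced !inE xS yS Uxy !orbT.
Qed.

Variables (L : Type) (ok : VR -> L -> Prop) (compat : VR -> VR -> L -> L -> Prop).
Hypothesis compat_fwd :
  forall i j u, ER i j -> ok i u -> exists2 v, ok j v & compat i j u v.
Hypothesis compat_bwd :
  forall i j v, ER i j -> ok j v -> exists2 u, ok i u & compat i j u v.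

Definition labelling_on S (m : VR -> L) : Prop :=
  [/\ {in S, forall i, ok i (m i)} &
      {in S &, forall i j, ER i j -> compat i j (m i) (m j)}].

Lemma labelling_extend S m a b : induced_connected S -> labelling_on S m ->
  a \in S -> b \notin S -> undirected ER a b ->
  exists m', labelling_on (b |: S) m'.
Proof.
move=> connS [okS compatS] aS bS Uab.
have cross_ab : crossing S b (a, b) by rewrite /crossing /= aS eqxx.
have cross_ba : crossing S b (b, a) by rewrite /crossing /= aS eqxx orbT.
have a_neq_b : a != b by apply: contraNneq bS => <-.
have [w ok_w compat_w] : exists2 w, ok b w &
    forall e, ER e.1 e.2 -> crossing S b e ->
      compat e.1 e.2 (if e.1 == b then w else m e.1)
                     (if e.2 == b then w else m e.2).
  case/orP: Uab => [Eab | Eba].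
    have [w ok_w cw] := compat_fwd Eab (okS a aS); exists w => // e Ee cross_e.
    rewrite (crossing_edge_unique (e' := (a, b)) connS bS Ee Eab cross_e cross_ab).
    by rewrite /= eqxx (negbTE a_neq_b).
  have [w ok_w cw] := compat_bwd Eba (okS a aS); exists w => // e Ee cross_e.
  rewrite (crossing_edge_unique (e' := (b, a)) connS bS Ee Eba cross_e cross_ba).
  by rewrite /= eqxx (negbTE a_neq_b).
exists (fun i => if i == b then w else m i); split.
  by move=> i; rewrite !inE; case: eqP => [-> | _ /okS].
move=> i j; rewrite !inE => /orP[/eqP-> | iS] /orP[/eqP-> | jS] Eij.
- by rewrite (negbTE (tree_loopless b)) in Eij.
- by apply: (compat_w (b, j) Eij); rewrite /crossing /= jS eqxx orbT.
- by apply: (compat_w (i, b) Eij); rewrite /crossing /= iS eqxx.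
- have /negbTE-> : i != b by apply: contraNneq bS => <-.
  have /negbTE-> : j != b by apply: contraNneq bS => <-.
  exact: compatS.
Qed.

Lemma labelling_grow n S m : #|~: S| = n -> induced_connected S -> S != set0 ->
  labelling_on S m -> exists m', labelling_on [set: VR] m'.
Proof.
elim: n S m => [|n IHn] S m cardC connS S_neq0 labS.
  have SC0 : ~: S = set0 by apply/eqP; rewrite -cards_eq0 cardC.
  by exists m; rewrite -setC0 -SC0 setCK.
have [i iS] := set0Pn _ S_neq0.
have [j jS] : exists j, j \in ~: S by apply/card_gt0P; rewrite cardC.
rewrite inE in jS.
have [a [b [aS bS Uab]]] := exists_boundary_edge iS jS.
have [m' labS'] := labelling_extend connS labS aS bS Uab.
apply: (IHn (b |: S) m') => //.
- apply/eqP; rewrite -(eqn_add2l #|b |: S|) cardsC cardsU1 bS -(cardsC S) cardC.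
  by rewrite addnS add1n addSn.
- exact: induced_connected_setU1 connS aS Uab.
- by apply/set0Pn; exists b; rewrite !inE eqxx.
Qed.

Lemma tree_labelling : (exists i u, ok i u) ->
  exists m, (forall i, ok i (m i)) /\ (forall i j, ER i j -> compat i j (m i) (m j)).
Proof.
case=> i0 [u0 ok0].
have [|||m [okm compatm]] := labelling_grow (m := fun _ => u0) (erefl #|~: [set i0]|).
- by move=> i j; rewrite !inE => /eqP-> /eqP->; apply: connect0.
- by apply/set0Pn; exists i0; rewrite inE.
- split=> [i | i j]; rewrite !inE => /eqP-> //= /eqP->.
  by rewrite (negbTE (tree_loopless i0)).
by exists m; split=> [i | i j Eij]; [apply: okm | apply: compatm]; rewrite ?inE.
Qed.

End TreeLabelling.

Definition positive_support (R : numDomainType) (I : finType) (g : I -> R) :=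
  [set e | 0 < g e].

Lemma card_positive_support_lt (R : numDomainType) (I : finType) (g h : I -> R) k :
  (forall e, h e <= g e) -> 0 < g k -> h k <= 0 ->
  (#|positive_support h| < #|positive_support g|)%N.
Proof.
move=> h_le_g g_k h_k; apply: proper_card; apply/properP; split.
  by apply/subsetP => e; rewrite !inE => /lt_le_trans; apply.
by exists k; rewrite !inE //; apply/negP => /lt_le_trans/(_ h_k); rewrite ltxx.
Qed.

Lemma ler_sum_mixture (R : numDomainType) (I J : finType) (P : pred I)
    (Q : J -> pred I) (F c : I -> R) (f : J -> R) :
  (forall i, P i -> 0 <= F i) ->
  (forall i, P i -> \sum_j f j * (Q j i)%:R <= c i) ->
  \sum_j f j * \sum_(i | P i && Q j i) F i <= \sum_(i | P i) F i * c i.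
Proof.
move=> F_ge0 weight_le.
have -> : \sum_j f j * \sum_(i | P i && Q j i) F i =
          \sum_(i | P i) F i * \sum_j f j * (Q j i)%:R.
  under eq_bigr => j _ do rewrite big_mkcondr mulr_sumr.
  rewrite exchange_big /=; apply: eq_bigr => i _; rewrite mulr_sumr.
  by apply: eq_bigr => j _; case: (Q j i); rewrite /= ?mulr1 ?mulr0 // mulrC.
by apply: ler_sum => i Pi; rewrite ler_wpM2l ?F_ge0 ?weight_le.
Qed.

Section Decomposition.
Variables (R : realDomainType) (VS VR : finType) (ES : rel VS) (ER : rel VR)
  (Vallow : VR -> {set VS}) (Eallow : VR -> VR -> rel VS).
Hypothesis Eallow_ES : forall i j u v, Eallow i j u v -> ES u v.
Hypothesis tree : underlying_tree ER.

Local Notation mapping := (mapping VS VR).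
Local Notation valid := (valid_mapping ER Vallow Eallow).

(* The flow constraints of the LP for the request, without upper bounds and
   allocation variables: this is what subtracting a mapping preserves. *)
Record flow_feasible (x : R) (y : VR -> VS -> R)
    (z : VR -> VR -> VS -> VS -> R) : Prop := FlowFeasible {
  feasible_y_ge0 : forall i u, 0 <= y i u;
  feasible_z_ge0 : forall i j u v, ER i j -> 0 <= z i j u v;
  feasible_y_sum : forall i, \sum_(u in Vallow i) y i u = x;
  feasible_y_out : forall i u, u \notin Vallow i -> y i u = 0;
  feasible_conservation : forall i j, ER i j -> forall u,
    \sum_(v | ES u v) z i j u v - \sum_(v | ES v u) z i j v u = y i u - y j u;
  feasible_z_out : forall i j u v, ER i j -> ~~ Eallow i j u v -> z i j u v = 0 }.

(* All LP variables of the request in one index type (y on the left, z on the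
   right, z of non-edges read as 0), so that the bottleneck and the support
   count below range over both kinds at once. *)
Definition lp_index := (VR * VS + VR * VR * VS * VS)%type.

Definition lp_entry y z (e : lp_index) : R :=
  match e with
  | inl (i, u) => y i u
  | inr (i, j, u, v) => if ER i j then z i j u v else 0
  end.

Definition on_mapping (M : mapping) (e : lp_index) : bool :=
  match e with
  | inl (i, u) => mV M i == u
  | inr (i, j, u, v) => ER i j && ((u, v) \in mE M i j)
  end.

Definition support_size y z := #|positive_support (lp_entry y z)|.

Definition residual_y f M (y : VR -> VS -> R) i u := y i u - f * (mV M i == u)%:R.

Definition residual_z f M (z : VR -> VR -> VS -> VS -> R) i j u v :=
  z i j u v - f * ((u, v) \in mE M i j)%:R.

Lemma lp_entry_residual f M y z e :
  lp_entry (residual_y f M y) (residual_z f M z) e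
  = lp_entry y z e - f * (on_mapping M e)%:R.
Proof.
by case: e => [[i u] | [[[i j] u] v]] //=; case: (ER i j); rewrite //= mulr0 subr0.
Qed.

Section Step.
Variables (x : R) (y : VR -> VS -> R) (z : VR -> VR -> VS -> VS -> R).
Hypothesis feasible : flow_feasible x y z.
Hypothesis x_gt0 : 0 < x.

Let y_ge0 := feasible_y_ge0 feasible.
Let z_ge0 := feasible_z_ge0 feasible.

Lemma exists_positive_y : exists i u, 0 < y i u.
Proof.
have [/card_gt0P[i _] _ _] := tree; exists i.
have sum_neq0 : \sum_(u in Vallow i) y i u <> 0.
  by rewrite (feasible_y_sum feasible); apply/eqP; rewrite gt_eqF.
by have [u /andP[_ y_pos]] := psumr_neq0P (fun u _ => y_ge0 i u) sum_neq0; exists u.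
Qed.

Lemma positive_labelling : exists m : VR -> VS,
  (forall i, 0 < y i (m i)) /\
  (forall i j, ER i j -> connect (fun u v => 0 < z i j u v) (m i) (m j)).
Proof.
apply: (tree_labelling (ok := fun i u => 0 < y i u)
  (compat := fun i j u v => connect (fun u v => 0 < z i j u v) u v) tree).
- move=> i j u Eij.
  exact/(flow_source_reaches_sink (fun u v => z_ge0 u v Eij) (y_ge0 i) (y_ge0 j)
    (feasible_conservation feasible Eij)).
- move=> i j v Eij.
  exact/(flow_sink_reached_from_source (fun u v => z_ge0 u v Eij) (y_ge0 i)
    (y_ge0 j) (feasible_conservation feasible Eij)).
- exact: exists_positive_y.
Qed.

Lemma exists_supported_mapping : exists2 M : mapping,
  valid M & forall e, on_mapping M e -> 0 < lp_entry y z e.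
Proof.
have [m [y_m z_conn]] := positive_labelling.
have [P P_path] : exists P : VR * VR -> seq VS, forall i j, ER i j ->
    [/\ path (fun u v => 0 < z i j u v) (m i) (P (i, j)),
        last (m i) (P (i, j)) = m j & uniq (m i :: P (i, j))].
  have [|P P_path] := fin_all_exists (U := fun _ => seq VS)
    (P := fun (ij : VR * VR) p =>
    ER ij.1 ij.2 -> [/\ path (fun u v => 0 < z ij.1 ij.2 u v) (m ij.1) p,
                        last (m ij.1) p = m ij.2 & uniq (m ij.1 :: p)]).
    case=> i j /=; have [Eij | _] := boolP (ER i j); last by exists [::].
    by have [p p_spec] := connect_uniq_path (z_conn i j Eij); exists p.
  by exists P => i j; apply: (P_path (i, j)).
have z_allowed i j u v : ER i j -> 0 < z i j u v -> Eallow i j u v.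
  move=> Eij z_pos; apply: contraTT z_pos => /(feasible_z_out feasible Eij) ->.
  by rewrite ltxx.
exists (Mapping m (fun i j => path_edges (m i) (P (i, j)))).
  split=> [i | i j Eij | i j Eij] /=.
  - apply: contraTT (y_m i) => /(feasible_y_out feasible) ->; by rewrite ltxx.
  - have [p_path p_last p_uniq] := P_path i j Eij; exists (P (i, j)); split=> //.
    by apply: sub_path p_path => u v /(z_allowed i j u v Eij).
  - by have [_ p_last p_uniq] := P_path i j Eij; rewrite path_edges_eq0 // p_last.
case=> [[i u] /= /eqP <- // | [[[i j] u] v] /= /andP[Eij uv]].
by rewrite Eij; have [p_path _ _] := P_path i j Eij; apply: path_edges_rel p_path uv.
Qed.

Lemma lp_entry_ge0 e : 0 <= lp_entry y z e.
Proof. by case: e => [[i u] | [[[i j] u] v]] //=; case: ifP => // /z_ge0. Qed.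

Lemma flow_feasible_residual f M : valid M ->
  (forall e, on_mapping M e -> f <= lp_entry y z e) ->
  flow_feasible (x - f) (residual_y f M y) (residual_z f M z).
Proof.
move=> [M_allowed M_paths _] f_le.
have residual_ge0 e : 0 <= lp_entry (residual_y f M y) (residual_z f M z) e.
  rewrite lp_entry_residual; have := f_le e.
  by case: (on_mapping M e) => [/(_ isT) | _];
    rewrite ?mulr1 ?mulr0 ?subr0 ?subr_ge0 // lp_entry_ge0.
have M_ne i u : u \notin Vallow i -> (mV M i == u) = false.
  by move=> u_out; apply: contraNF u_out => /eqP <-.
have M_edges i j u v : ER i j -> (u, v) \in mE M i j -> Eallow i j u v.
  by move=> /M_paths[p [p_path _ _ ->]] /(path_edges_rel p_path).
split.
- by move=> i u; apply: (residual_ge0 (inl (i, u))).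
- by move=> i j u v Eij; have := residual_ge0 (inr (i, j, u, v)); rewrite /= Eij.
- move=> i; rewrite /residual_y sumrB (feasible_y_sum feasible) -mulr_sumr.
  rewrite (bigD1 (mV M i)) //= eqxx big1 ?addr0 ?mulr1 // => u /andP[_].
  by rewrite eq_sym => /negbTE->.
- move=> i u u_out; rewrite /residual_y M_ne // mulr0 subr0.
  exact: (feasible_y_out feasible u_out).
- move=> i j Eij u; have [p [p_path p_last p_uniq mE_p]] := M_paths i j Eij.
  have p_ES : path ES (mV M i) p by apply: sub_path p_path => ? ?; apply: Eallow_ES.
  have p_flow := path_edges_flow R u p_ES p_uniq.
  rewrite /residual_z /residual_y !sumrB -!mulr_sumr mE_p.
  have mixB (a b c d : R) : a - f * b - (c - f * d) = (a - c) - f * (b - d) by ring.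
  by rewrite !mixB (feasible_conservation feasible Eij) p_flow p_last ![u == _]eq_sym.
- move=> i j u v Eij u_v_out; rewrite /residual_z (feasible_z_out feasible Eij) //.
  suff /negbTE-> : (u, v) \notin mE M i j by rewrite mulr0 subr0.
  by apply: contra u_v_out; apply: M_edges.
Qed.

(* The weight is the bottleneck: the least LP value on the mapping, which the
   residual turns into 0. *)
Lemma flow_feasible_step : exists f M, [/\ 0 < f, valid M,
  flow_feasible (x - f) (residual_y f M y) (residual_z f M z) &
  (support_size (residual_y f M y) (residual_z f M z) < support_size y z)%N].
Proof.
have [M validM M_pos] := exists_supported_mapping.
have [/card_gt0P[i0 _] _ _] := tree.
have on_i0 : on_mapping M (inl (i0, mV M i0)) by rewrite /= eqxx.
have [e0 on_e0 f_le] := arg_minP (lp_entry y z) on_i0.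
have f_gt0 := M_pos e0 on_e0.
exists (lp_entry y z e0), M; split => //; first exact: flow_feasible_residual.
apply: (card_positive_support_lt (k := e0)) => [e | // | ].
  by rewrite lp_entry_residual lerBlDr lerDl mulr_ge0 ?ler0n ?ltW.
by rewrite lp_entry_residual on_e0 mulr1 subrr.
Qed.

End Step.

Definition decomposition n (s : n.-tuple (R * mapping)) x y z :=
  [/\ forall k, 0 < (tnth s k).1 /\ valid (tnth s k).2,
      x = \sum_(k < n) (tnth s k).1,
      forall i u, \sum_(k < n) (tnth s k).1 * (mV (tnth s k).2 i == u)%:R <= y i u &
      forall i j u v, ER i j ->
        \sum_(k < n) (tnth s k).1 * ((u, v) \in mE (tnth s k).2 i j)%:R
        <= z i j u v].

Lemma decomposition_nil y z :
  (forall i u, 0 <= y i u) -> (forall i j u v, ER i j -> 0 <= z i j u v) ->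
  decomposition [tuple] 0 y z.
Proof.
by move=> y_ge0 z_ge0; split=> [[] // | | i u | i j u v Eij]; rewrite big_ord0 // z_ge0.
Qed.

Lemma decomposition_cons n (s : n.-tuple (R * mapping)) f M x y z :
  0 < f -> valid M ->
  decomposition s (x - f) (residual_y f M y) (residual_z f M z) ->
  decomposition [tuple of (f, M) :: s] x y z.
Proof.
move=> f_gt0 validM [s_ok s_x s_y s_z]; split.
- by move=> k; case: (unliftP ord0 k) => [k' | ] ->; rewrite ?tnthS ?tnth0.
- rewrite big_ord_recl tnth0; under eq_bigr do rewrite tnthS.
  by rewrite -s_x addrC subrK.
- move=> i u; rewrite big_ord_recl tnth0; under eq_bigr do rewrite tnthS.
  by rewrite addrC -lerBrDr; apply: s_y.
- move=> i j u v Eij; rewrite big_ord_recl tnth0; under eq_bigr do rewrite tnthS.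
  by rewrite addrC -lerBrDr; apply: s_z.
Qed.

Theorem flow_decomposition x y z : flow_feasible x y z ->
  exists n (s : n.-tuple (R * mapping)), decomposition s x y z.
Proof.
move=> feasible; move Nyz: (support_size y z) => N.
elim/ltn_ind: N x y z Nyz feasible => N IHN x y z Nyz feasible.
have x_ge0 : 0 <= x.
  have [/card_gt0P[i0 _] _ _] := tree.
  rewrite -(feasible_y_sum feasible i0); apply: sumr_ge0 => u _.
  exact: (feasible_y_ge0 feasible).
move: x_ge0; rewrite le0r => /orP[/eqP-> | x_gt0].
  exists 0, [tuple].
  exact: decomposition_nil (feasible_y_ge0 feasible) (feasible_z_ge0 feasible).
have [f [M [f_gt0 validM feasible' smaller]]] := flow_feasible_step feasible x_gt0.
rewrite Nyz in smaller; have [n [s dec]] := IHN _ smaller _ _ _ erefl feasible'.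
by exists n.+1, [tuple of (f, M) :: s]; apply: decomposition_cons.
Qed.

End Decomposition.

Theorem lemma6 (R : realFieldType) (VS VR T : finType) (ES : rel VS)
    (VSt : T -> {set VS}) (ER : rel VR) (typ : VR -> T)
    (dn : VR -> R) (de : VR -> VR -> R)
    (Vallow : VR -> {set VS}) (Eallow : VR -> VR -> rel VS)
    (x : R) (y : VR -> VS -> R) (z : VR -> VR -> VS -> VS -> R)
    (an : T -> VS -> R) (ae : VS -> VS -> R) :
  (forall i, 0 <= dn i) ->
  (forall i j, ER i j -> 0 <= de i j) ->
  (forall i, Vallow i \subset VSt (typ i)) ->
  (forall i j u v, Eallow i j u v -> ES u v) ->
  underlying_tree ER ->
  lp_feasible ES VSt ER typ dn de Vallow Eallow x y z an ae ->
  exists (n : nat) (f : 'I_n -> R) (m : 'I_n -> mapping VS VR),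
    [/\ (forall k, 0 < f k /\ valid_mapping ER Vallow Eallow (m k)),
        x = \sum_(k < n) f k,
        (forall tau u, u \in VSt tau ->
            \sum_(k < n) f k * alloc_node typ dn (m k) tau u <= an tau u) &
        (forall u v, ES u v ->
            \sum_(k < n) f k * alloc_edge ER de (m k) u v <= ae u v)].
Proof.
move=> dn_ge0 de_ge0 _ Eallow_ES tree.
move=> [[_ y01 z01 _ _] [y_sum y_out cons z_out] ae_eq an_eq].
have feasible : flow_feasible ES ER Vallow Eallow x y z.
  split=> // [i u | i j u v Eij]; first by case/andP: (y01 i u).
  by case/andP: (z01 i j u v Eij).
have [n [s [s_ok s_x s_y s_z]]] := flow_decomposition Eallow_ES tree feasible.
exists n, (fun k => (tnth s k).1), (fun k => (tnth s k).2); split=> //.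
  by move=> tau u u_in; rewrite an_eq //; apply: ler_sum_mixture.
move=> u v Euv; rewrite ae_eq //.
by apply: ler_sum_mixture => [[i j] /de_ge0 // | [i j] Eij]; apply: s_z.
Qed.
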